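(* Let $j\geq 7$ and $\mu_1,\mu_2>0$. Then for every integer $l$ with $2\leq l\leq \lfloor (j+1)/2\rfloor$ one has $\mathbf{g}_1(j,l)>0$ and $\chi(j,l):=\mu_1\mu_2\left[\mathbf{g}_1(j,l)^2+\mathbf{g}_2(j)^2-\mathbf{g}_3(j,l)^2\right]+(\mu_1^2+\mu_2^2)\,\mathbf{g}_1(j,l)\,\mathbf{g}_2(j)>0 .$
   Context: For $\varphi\in\mathbb{R}\setminus2\pi\mathbb{Z}$ let $\mathbf{f}(\varphi)=\frac{1}{8|\sin(\varphi/2)|}\left(\frac{2}{\sin^2(\varphi/2)}-1\right)+\cos\varphi$. Define $\mathbf{g}_1(j,l)=\sum_{k=1}^{j-1}\mathbf{f}(\frac{2k\pi}{j})(1-\cos\frac{2(l-1)k\pi}{j})$, $\mathbf{g}_2(j)=\sum_{k=1}^{j}\mathbf{f}(\frac{(2k-1)\pi}{j})$, $\mathbf{g}_3(j,l)=\sum_{k=1}^{j}\mathbf{f}(\frac{(2k-1)\pi}{j})\cos\frac{(l-1)(2k-1)\pi}{j}$. *)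

From Stdlib Require Import Reals Lra Lia.
Open Scope R_scope.

Fixpoint sum1 (n : nat) (F : nat -> R) : R :=
  match n with
  | O => 0
  | S m => sum1 m F + F n
  end.

Definition f (phi : R) : R :=
  1 / (8 * Rabs (sin (phi / 2))) * (2 / (sin (phi / 2)) ^ 2 - 1) + cos phi.

Definition g1 (j l : nat) : R :=
  sum1 (j - 1) (fun k => f (2 * INR k * PI / INR j)
                         * (1 - cos (2 * (INR l - 1) * INR k * PI / INR j))).

Definition g2 (j : nat) : R :=
  sum1 j (fun k => f ((2 * INR k - 1) * PI / INR j)).

Definition g3 (j l : nat) : R :=
  sum1 j (fun k => f ((2 * INR k - 1) * PI / INR j)
                   * cos ((INR l - 1) * (2 * INR k - 1) * PI / INR j)).

Definition chi (mu1 mu2 : R) (j l : nat) : R :=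
  mu1 * mu2 * (g1 j l ^ 2 + g2 j ^ 2 - g3 j l ^ 2)
  + (mu1 ^ 2 + mu2 ^ 2) * g1 j l * g2 j.

From Pilot Require Import Defs.
From Stdlib Require Import Reals Lra Lia List QArith Qround Qreals.
Open Scope R_scope.

(* Write [f = h + cos] with [h phi = (2 / s^2 - 1) / (8 |s|) > 0], [s = sin (phi / 2)].
   Product-to-sum formulas reduce the cosine parts of [g1], [g2], [g3] to sums
   [sum_k cos (q x_k)] over the nodes [x_k = 2 k PI / j] resp. [(2 k - 1) PI / j], which
   vanish up to a constant for [0 < q < j].  For [l >= 3] this leaves
   [g1 = sum h(x_k) (1 - cos ((l - 1) x_k)) > 0] and [g3 = sum h(th_k) cos ((l - 1) th_k)],
   so [|g3| <= g2].  For [l = 2] it leaves [g1 = E/4 - j/2] and [g2 - g3 = O/4 - j/2],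
   where [E], [O] are sums of [psi (sin y) = 2 / sin y - sin y] over [k PI / j] and
   [(2 k - 1) PI / (2 j)]; both exceed [2 j] by [1 / sin y >= 1 / y + 1 / (PI - y) - 2 / PI]
   and harmonic-sum bounds, except [E] for [7 <= j <= 17] (where the margin is as small
   as [0.06]), which is checked in exact rational arithmetic from a Taylor bound on [sin].
   In all cases [|g3| < g1 + g2], and
   [chi = mu1 mu2 ((g1 + g2)^2 - g3^2) + (mu1 - mu2)^2 g1 g2 > 0]. *)

Lemma sum1_ext n F G :
  (forall k, (1 <= k <= n)%nat -> F k = G k) -> sum1 n F = sum1 n G.
Proof.
  induction n as [|n IH]; intros H; simpl; [reflexivity|].
  rewrite IH by (intros; apply H; lia). rewrite H by lia. reflexivity.
Qed.

Lemma sum1_le n F G :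
  (forall k, (1 <= k <= n)%nat -> F k <= G k) -> sum1 n F <= sum1 n G.
Proof.
  induction n as [|n IH]; intros H; simpl; [lra|].
  assert (sum1 n F <= sum1 n G) by (apply IH; intros; apply H; lia).
  assert (F (S n) <= G (S n)) by (apply H; lia). lra.
Qed.

Lemma sum1_plus n F G : sum1 n (fun k => F k + G k) = sum1 n F + sum1 n G.
Proof. induction n; simpl; [lra|]. rewrite IHn; lra. Qed.

Lemma sum1_scal n c F : sum1 n (fun k => c * F k) = c * sum1 n F.
Proof. induction n; simpl; [lra|]. rewrite IHn; lra. Qed.

Lemma sum1_const n c : sum1 n (fun _ => c) = INR n * c.
Proof. induction n; simpl sum1; [simpl; lra|]. rewrite IHn, S_INR; lra. Qed.

Lemma sum1_nonneg n F :
  (forall k, (1 <= k <= n)%nat -> 0 <= F k) -> 0 <= sum1 n F.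
Proof.
  intros H. rewrite <- (Rmult_0_r (INR n)), <- sum1_const. apply sum1_le, H.
Qed.

Lemma sum1_pos n F : (1 <= n)%nat ->
  (forall k, (1 <= k <= n)%nat -> 0 <= F k) -> 0 < F 1%nat -> 0 < sum1 n F.
Proof.
  intros Hn H H1. induction n as [|[|n] IH]; [lia|simpl; lra|].
  change (sum1 (S (S n)) F) with (sum1 (S n) F + F (S (S n))).
  assert (0 < sum1 (S n) F) by (apply IH; [lia|intros; apply H; lia]).
  assert (0 <= F (S (S n))) by (apply H; lia). lra.
Qed.

Lemma sum1_le_mono m n F : (m <= n)%nat ->
  (forall k, (m < k <= n)%nat -> 0 <= F k) -> sum1 m F <= sum1 n F.
Proof.
  intros Hmn. induction Hmn as [|n Hmn IH]; intros H; [lra|]. simpl.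
  assert (sum1 m F <= sum1 n F) by (apply IH; intros; apply H; lia).
  assert (0 <= F (S n)) by (apply H; lia). lra.
Qed.

Lemma Rabs_sum1_le n F : Rabs (sum1 n F) <= sum1 n (fun k => Rabs (F k)).
Proof.
  induction n; simpl; [rewrite Rabs_R0; lra|].
  eapply Rle_trans; [apply Rabs_triang|lra].
Qed.

Lemma sum1_shift n F : sum1 (S n) F = F 1%nat + sum1 n (fun k => F (S k)).
Proof. induction n; simpl; [lra|]. simpl in IHn. rewrite IHn. lra. Qed.

Lemma sum1_rev n F : sum1 n F = sum1 n (fun k => F (S n - k)%nat).
Proof.
  induction n as [|n IH]; [reflexivity|].
  change (sum1 (S n) F) with (sum1 n F + F (S n)).
  rewrite (sum1_shift n (fun k => F (S (S n) - k)%nat)), IH.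
  replace (S (S n) - 1)%nat with (S n) by lia. apply Rplus_comm.
Qed.

Lemma sum1_cos_arith a b N :
  2 * sin (a / 2) * sum1 N (fun k => cos (b + INR k * a))
  = sin (b + (INR N + / 2) * a) - sin (b + a / 2).
Proof.
  induction N as [|N IH].
  - simpl. replace (b + (0 + / 2) * a) with (b + a / 2) by field. ring.
  - change (sum1 (S N) _) with
      (sum1 N (fun k => cos (b + INR k * a)) + cos (b + INR (S N) * a)).
    rewrite Rmult_plus_distr_l, IH, S_INR.
    set (c := b + (INR N + 1) * a).
    replace (b + (INR N + 1 + / 2) * a) with (c + a / 2) by (unfold c; field).
    replace (b + (INR N + / 2) * a) with (c - a / 2) by (unfold c; field).
    rewrite (sin_plus c (a / 2)), (sin_minus c (a / 2)). ring.
Qed.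

Lemma frac_PI_range (x y : R) : 0 < x < y -> 0 < x * PI / y < PI.
Proof.
  intros [Hx Hxy]. pose proof PI_RGT_0. split.
  - apply Rdiv_lt_0_compat; [nra|lra].
  - apply Rmult_lt_reg_r with y; [lra|].
    unfold Rdiv. rewrite Rmult_assoc, Rinv_l, Rmult_1_r by lra. nra.
Qed.

Lemma sin_frac_PI_pos (x y : R) : 0 < x < y -> 0 < sin (x * PI / y).
Proof. intros H. apply sin_gt_0; apply frac_PI_range, H. Qed.

Section CosineSums.
Variable j : nat.
Hypothesis j_pos : (0 < j)%nat.

Definition cos_sum_even (q : nat) : R :=
  sum1 (j - 1) (fun k => cos (INR q * (2 * INR k * PI / INR j))).
Definition cos_sum_odd (q : nat) : R :=
  sum1 j (fun k => cos (INR q * ((2 * INR k - 1) * PI / INR j))).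

Let INR_j_pos : 0 < INR j. Proof. apply lt_0_INR, j_pos. Qed.

Lemma sin_nat_frac_PI_pos (q : nat) : (0 < q < j)%nat -> 0 < sin (INR q * PI / INR j).
Proof. intros. apply sin_frac_PI_pos. split; [apply lt_0_INR|apply lt_INR]; lia. Qed.

Lemma cos_sum_even0 : cos_sum_even 0 = INR (j - 1).
Proof.
  unfold cos_sum_even. rewrite (sum1_ext _ _ (fun _ => 1)), sum1_const; [ring|].
  intros. rewrite Rmult_0_l. apply cos_0.
Qed.

Lemma cos_sum_odd0 : cos_sum_odd 0 = INR j.
Proof.
  unfold cos_sum_odd. rewrite (sum1_ext _ _ (fun _ => 1)), sum1_const; [ring|].
  intros. rewrite Rmult_0_l. apply cos_0.
Qed.

(* Both sums telescope: multiply by [2 sin (q PI / j)] and use [sum1_cos_arith]. *)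
Lemma cos_sum_even_lt (q : nat) : (0 < q < j)%nat -> cos_sum_even q = -1.
Proof.
  intros Hq. pose proof (sin_nat_frac_PI_pos q Hq) as Hs.
  set (a := 2 * INR q * PI / INR j).
  pose proof (sum1_cos_arith a 0 (j - 1)) as T.
  replace (a / 2) with (INR q * PI / INR j) in T by (unfold a; field; lra).
  rewrite minus_INR, INR_1 in T by lia.
  replace (0 + (INR j - 1 + / 2) * a) with (- (INR q * PI / INR j) + 2 * INR q * PI) in T
    by (unfold a; field; lra).
  rewrite sin_period, sin_neg, Rplus_0_l in T.
  apply Rmult_eq_reg_l with (2 * sin (INR q * PI / INR j)); [|lra].
  unfold cos_sum_even. rewrite (sum1_ext _ _ (fun k => cos (0 + INR k * a))); [lra|].
  intros k _. f_equal. unfold a. field. lra.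
Qed.

Lemma cos_sum_odd_lt (q : nat) : (0 < q < j)%nat -> cos_sum_odd q = 0.
Proof.
  intros Hq. pose proof (sin_nat_frac_PI_pos q Hq) as Hs.
  set (a := 2 * INR q * PI / INR j).
  set (b := - (INR q * PI / INR j)).
  pose proof (sum1_cos_arith a b j) as T.
  replace (a / 2) with (INR q * PI / INR j) in T by (unfold a; field; lra).
  replace (b + (INR j + / 2) * a) with (0 + 2 * INR q * PI) in T
    by (unfold a, b; field; lra).
  replace (b + INR q * PI / INR j) with 0 in T by (unfold b; ring).
  rewrite sin_period, sin_0 in T.
  apply Rmult_eq_reg_l with (2 * sin (INR q * PI / INR j)); [|lra].
  unfold cos_sum_odd. rewrite (sum1_ext _ _ (fun k => cos (b + INR k * a))); [lra|].
  intros k _. f_equal. unfold a, b. field. lra.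
Qed.

End CosineSums.

Definition h (phi : R) : R :=
  1 / (8 * Rabs (sin (phi / 2))) * (2 / sin (phi / 2) ^ 2 - 1).

Definition psi (s : R) : R := 2 / s - s.

Lemma f_eq_h_add_cos (phi : R) : Defs.f phi = h phi + cos phi.
Proof. reflexivity. Qed.

Lemma h_pos (phi : R) : sin (phi / 2) <> 0 -> 0 < h phi.
Proof.
  intros H. unfold h. set (s := sin (phi / 2)) in *.
  pose proof (SIN_bound (phi / 2)) as B. fold s in B.
  assert (0 < Rabs s) by (apply Rabs_pos_lt; auto).
  assert (0 < s ^ 2 <= 1) by (split; nra).
  assert (2 <= 2 / s ^ 2).
  { apply Rmult_le_reg_r with (s ^ 2); [lra|].
    unfold Rdiv. rewrite Rmult_assoc, Rinv_l, Rmult_1_r by lra. nra. }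
  apply Rmult_lt_0_compat; [apply Rdiv_lt_0_compat|]; lra.
Qed.

Lemma h_mul_one_sub_cos (phi : R) :
  0 < sin (phi / 2) -> h phi * (1 - cos phi) = psi (sin (phi / 2)) / 4.
Proof.
  intros H. replace (cos phi) with (cos (2 * (phi / 2))) by (f_equal; field).
  rewrite cos_2a_sin. unfold h, psi. rewrite Rabs_pos_eq by lra. field. lra.
Qed.

Lemma h_mul_one_add_cos_nonneg (phi : R) :
  sin (phi / 2) <> 0 -> 0 <= h phi * (1 + cos phi).
Proof.
  intros H. replace (cos phi) with (cos (2 * (phi / 2))) by (f_equal; field).
  rewrite cos_2a_cos. pose proof (h_pos phi H). pose proof (pow2_ge_0 (cos (phi / 2))).
  apply Rmult_le_pos; nra.
Qed.

Lemma cos_mul_cos_shift (x : R) (l : nat) : (2 <= l)%nat ->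
  cos x * cos ((INR l - 1) * x) = (cos (INR l * x) + cos (INR (l - 2) * x)) / 2.
Proof.
  intros Hl. rewrite minus_INR by lia.
  replace (INR l * x) with ((INR l - 1) * x + x) by ring.
  replace ((INR l - INR 2) * x) with ((INR l - 1) * x - x) by (simpl; ring).
  rewrite cos_plus, cos_minus. field.
Qed.

Section Expansions.
Variable j : nat.

Let even_node (k : nat) : R := 2 * INR k * PI / INR j.
Let odd_node (k : nat) : R := (2 * INR k - 1) * PI / INR j.

Lemma g1_expand (l : nat) : (2 <= l)%nat ->
  g1 j l = sum1 (j - 1) (fun k => h (even_node k) * (1 - cos ((INR l - 1) * even_node k)))
           + cos_sum_even j 1 - (cos_sum_even j l + cos_sum_even j (l - 2)) / 2.
Proof.
  intros Hl. unfold cos_sum_even.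
  transitivity (sum1 (j - 1) (fun k =>
    h (even_node k) * (1 - cos ((INR l - 1) * even_node k)) + cos (INR 1 * even_node k)
    + - / 2 * (cos (INR l * even_node k) + cos (INR (l - 2) * even_node k)))).
  - apply sum1_ext. intros k _.
    replace (2 * (INR l - 1) * INR k * PI / INR j) with ((INR l - 1) * even_node k)
      by (unfold even_node, Rdiv; ring).
    rewrite f_eq_h_add_cos, INR_1, Rmult_1_l.
    pose proof (cos_mul_cos_shift (even_node k) l Hl). fold (even_node k). lra.
  - rewrite !sum1_plus, sum1_scal, sum1_plus. unfold even_node. lra.
Qed.

Lemma g2_expand : g2 j = sum1 j (fun k => h (odd_node k)) + cos_sum_odd j 1.
Proof.
  unfold g2, cos_sum_odd. rewrite <- sum1_plus. apply sum1_ext. intros k _.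
  rewrite f_eq_h_add_cos, INR_1, Rmult_1_l. reflexivity.
Qed.

Lemma g3_expand (l : nat) : (2 <= l)%nat ->
  g3 j l = sum1 j (fun k => h (odd_node k) * cos ((INR l - 1) * odd_node k))
           + (cos_sum_odd j l + cos_sum_odd j (l - 2)) / 2.
Proof.
  intros Hl. unfold cos_sum_odd.
  transitivity (sum1 j (fun k =>
    h (odd_node k) * cos ((INR l - 1) * odd_node k)
    + / 2 * (cos (INR l * odd_node k) + cos (INR (l - 2) * odd_node k)))).
  - apply sum1_ext. intros k _.
    replace ((INR l - 1) * (2 * INR k - 1) * PI / INR j) with ((INR l - 1) * odd_node k)
      by (unfold odd_node, Rdiv; ring).
    rewrite f_eq_h_add_cos.
    pose proof (cos_mul_cos_shift (odd_node k) l Hl). fold (odd_node k). lra.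
  - rewrite sum1_plus, sum1_scal, sum1_plus. unfold odd_node. lra.
Qed.

End Expansions.

Definition even_sum (j : nat) : R :=
  sum1 (j - 1) (fun k => psi (sin (INR k * PI / INR j))).
Definition odd_sum (j : nat) : R :=
  sum1 j (fun k => psi (sin ((2 * INR k - 1) * PI / (2 * INR j)))).

Section Evaluation.
Variable j : nat.
Hypothesis j_gt2 : (2 < j)%nat.

Let INR_j_pos : 0 < INR j. Proof. apply lt_0_INR. lia. Qed.

Let sin_half_even_node_pos (k : nat) : (1 <= k <= j - 1)%nat ->
  0 < sin (2 * INR k * PI / INR j / 2).
Proof.
  intros. replace (2 * INR k * PI / INR j / 2) with (INR k * PI / INR j) by (field; lra).
  apply sin_nat_frac_PI_pos; lia.
Qed.

Let sin_half_odd_node_pos (k : nat) : (1 <= k <= j)%nat ->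
  0 < sin ((2 * INR k - 1) * PI / INR j / 2).
Proof.
  intros Hk. assert (1 <= INR k <= INR j) by (split; [apply (le_INR 1)|apply le_INR]; lia).
  replace ((2 * INR k - 1) * PI / INR j / 2) with ((2 * INR k - 1) * PI / (2 * INR j))
    by (field; lra).
  apply sin_frac_PI_pos. lra.
Qed.

Let h_odd_node_pos (k : nat) : (1 <= k <= j)%nat -> 0 < h ((2 * INR k - 1) * PI / INR j).
Proof. intros Hk. apply h_pos. specialize (sin_half_odd_node_pos k Hk). lra. Qed.

Lemma g2_eq : g2 j = sum1 j (fun k => h ((2 * INR k - 1) * PI / INR j)).
Proof. rewrite g2_expand, cos_sum_odd_lt by lia. ring. Qed.

Lemma g2_pos : 0 < g2 j.
Proof.
  rewrite g2_eq. apply sum1_pos; [lia| |apply h_odd_node_pos; lia].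
  intros k Hk. left. apply h_odd_node_pos, Hk.
Qed.

Lemma g1_2_eq : g1 j 2 = even_sum j / 4 - INR j / 2.
Proof.
  rewrite g1_expand, !cos_sum_even_lt, cos_sum_even0 by lia.
  rewrite minus_INR, INR_1 by lia.
  replace (INR 2 - 1) with 1 by (simpl; ring).
  assert (E : sum1 (j - 1) (fun k => h (2 * INR k * PI / INR j)
                * (1 - cos (1 * (2 * INR k * PI / INR j)))) = / 4 * even_sum j).
  { unfold even_sum. rewrite <- sum1_scal. apply sum1_ext. intros k Hk.
    rewrite Rmult_1_l, h_mul_one_sub_cos by (apply sin_half_even_node_pos; lia).
    replace (2 * INR k * PI / INR j / 2) with (INR k * PI / INR j) by (field; lra).
    field. }
  rewrite E. lra.
Qed.

Lemma g2_sub_g3_2_eq : g2 j - g3 j 2 = odd_sum j / 4 - INR j / 2.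
Proof.
  rewrite g2_eq, g3_expand, cos_sum_odd_lt, cos_sum_odd0 by lia.
  replace (INR 2 - 1) with 1 by (simpl; ring).
  assert (E : sum1 j (fun k => h ((2 * INR k - 1) * PI / INR j))
    = sum1 j (fun k => h ((2 * INR k - 1) * PI / INR j) * cos (1 * ((2 * INR k - 1) * PI / INR j)))
      + / 4 * odd_sum j).
  { unfold odd_sum. rewrite <- sum1_scal, <- sum1_plus. apply sum1_ext. intros k Hk.
    rewrite Rmult_1_l.
    pose proof (h_mul_one_sub_cos _ (sin_half_odd_node_pos k Hk)) as Hh.
    replace ((2 * INR k - 1) * PI / INR j / 2) with ((2 * INR k - 1) * PI / (2 * INR j))
      in Hh by (field; lra).
    lra. }
  rewrite E. lra.
Qed.

Lemma g2_add_g3_2_pos : 0 < g2 j + g3 j 2.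
Proof.
  rewrite g2_eq, g3_expand, cos_sum_odd_lt, cos_sum_odd0 by lia.
  replace (INR 2 - 1) with 1 by (simpl; ring).
  assert (0 <= sum1 j (fun k => h ((2 * INR k - 1) * PI / INR j)
                 + h ((2 * INR k - 1) * PI / INR j) * cos (1 * ((2 * INR k - 1) * PI / INR j)))).
  { apply sum1_nonneg. intros k Hk. rewrite Rmult_1_l, <- (Rmult_1_r (h _)) at 1.
    rewrite <- Rmult_plus_distr_l. apply h_mul_one_add_cos_nonneg.
    specialize (sin_half_odd_node_pos k Hk). lra. }
  rewrite sum1_plus in H. lra.
Qed.

Lemma g1_pos (l : nat) : (3 <= l < j)%nat -> 0 < g1 j l.
Proof.
  intros Hl. rewrite g1_expand, !cos_sum_even_lt by lia.
  cut (0 < sum1 (j - 1) (fun k => h (2 * INR k * PI / INR j)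
                              * (1 - cos ((INR l - 1) * (2 * INR k * PI / INR j))))); [lra|].
  assert (Hh : forall k, (1 <= k <= j - 1)%nat -> 0 < h (2 * INR k * PI / INR j)).
  { intros k Hk. apply h_pos. specialize (sin_half_even_node_pos k Hk). lra. }
  apply sum1_pos; [lia| |].
  - intros k Hk. pose proof (COS_bound ((INR l - 1) * (2 * INR k * PI / INR j))).
    specialize (Hh k Hk). nra.
  - apply Rmult_lt_0_compat; [apply Hh; lia|].
    set (y := (INR l - 1) * (2 * INR 1 * PI / INR j)).
    replace (cos y) with (cos (2 * (y / 2))) by (f_equal; field).
    rewrite cos_2a_sin.
    replace (y / 2) with (INR (l - 1) * PI / INR j)
      by (unfold y; rewrite minus_INR, INR_1 by lia; field; lra).
    pose proof (sin_nat_frac_PI_pos j ltac:(lia) (l - 1) ltac:(lia)). nra.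
Qed.

Lemma Rabs_g3_le (l : nat) : (3 <= l < j)%nat -> Rabs (g3 j l) <= g2 j.
Proof.
  intros Hl. rewrite g2_eq, g3_expand, !cos_sum_odd_lt by lia.
  rewrite Rplus_0_r, Rdiv_0_l, Rplus_0_r.
  eapply Rle_trans; [apply Rabs_sum1_le|]. apply sum1_le. intros k Hk.
  pose proof (h_odd_node_pos k Hk).
  pose proof (COS_bound ((INR l - 1) * ((2 * INR k - 1) * PI / INR j))).
  rewrite Rabs_mult, Rabs_pos_eq by lra.
  rewrite <- (Rmult_1_r (h _)) at 2. apply Rmult_le_compat_l; [lra|].
  apply Rabs_le. lra.
Qed.

End Evaluation.

Lemma PI_bounds : 314159 / 100000 < PI < 31416 / 10000.
Proof.
  pose proof (PI_2_3_7_ineq 2) as [Hlo Hhi].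
  unfold sum_f_R0, tg_alt, PI_2_3_7_tg, Ratan_seq in Hlo, Hhi. simpl in Hlo, Hhi.
  split; lra.
Qed.

Lemma sin_le_taylor5 (x : R) : 0 <= x <= PI -> sin x <= x - x ^ 3 / 6 + x ^ 5 / 120.
Proof.
  intros [H0 HPI]. pose proof (sin_bound x 0 H0 HPI) as [_ H].
  unfold sin_approx, sum_f_R0, sin_term in H. simpl in H. lra.
Qed.

(* On either half of [(0, PI)] one of [/ y], [/ (PI - y)] is at most [2 / PI] and the
   other is at most [/ sin y], since [sin y <= min y (PI - y)]. *)
Lemma inv_sin_ge (y : R) : 0 < y < PI -> / y + / (PI - y) - 2 / PI <= / sin y.
Proof.
  intros Hy. pose proof PI_bounds.
  assert (Hs : 0 < sin y) by (apply sin_gt_0; lra).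
  assert (S1 : sin y < y) by (apply sin_lt_x; lra).
  assert (S2 : sin y < PI - y) by (rewrite <- sin_PI_x; apply sin_lt_x; lra).
  assert (I1 : / y <= / sin y) by (apply Rinv_le_contravar; lra).
  assert (I2 : / (PI - y) <= / sin y) by (apply Rinv_le_contravar; lra).
  replace (2 / PI) with (/ (PI / 2)) by (field; lra).
  destruct (Rle_dec y (PI / 2)).
  - assert (/ (PI - y) <= / (PI / 2)) by (apply Rinv_le_contravar; lra). lra.
  - assert (/ y <= / (PI / 2)) by (apply Rinv_le_contravar; lra). lra.
Qed.

Lemma psi_sin_ge (y : R) :
  0 < y < PI -> 2 * / y + 2 * / (PI - y) - 4 / PI - 1 <= psi (sin y).
Proof.
  intros Hy. pose proof (inv_sin_ge y Hy). pose proof (SIN_bound y).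
  unfold psi, Rdiv in *. lra.
Qed.

(* The nodes [y k] are symmetric about [PI / 2], so the two bounds [/ y] and
   [/ (PI - y)] of [psi_sin_ge] sum to the same harmonic-type sum. *)
Lemma psi_sin_sum_ge (n : nat) (y : nat -> R) :
  (forall k, (1 <= k <= n)%nat -> 0 < y k < PI /\ PI - y k = y (S n - k)%nat) ->
  4 * sum1 n (fun k => / y k) - INR n * (4 / PI + 1)
  <= sum1 n (fun k => psi (sin (y k))).
Proof.
  intros Hy.
  assert (Rev : sum1 n (fun k => / y (S n - k)%nat) = sum1 n (fun k => / y k))
    by (symmetry; apply (sum1_rev n (fun k => / y k))).
  transitivity (sum1 n (fun k => 2 * / y k + 2 * / y (S n - k)%nat + - (4 / PI + 1))).
  - rewrite !sum1_plus, !sum1_scal, sum1_const, Rev. lra.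
  - apply sum1_le. intros k Hk. destruct (Hy k Hk) as [Hr <-].
    pose proof (psi_sin_ge _ Hr). lra.
Qed.

Definition harmonic (n : nat) : R := sum1 n (fun k => / INR k).
Definition odd_harmonic (n : nat) : R := sum1 n (fun k => / (2 * INR k - 1)).

Lemma harmonic_ge (n : nat) : (17 <= n)%nat -> 3.4395 <= harmonic n.
Proof.
  intros Hn. apply Rle_trans with (harmonic 17).
  - unfold harmonic. cbn [sum1]. rewrite !INR_IZR_INZ. simpl Z.of_nat. lra.
  - apply sum1_le_mono; [exact Hn|]. intros k Hk.
    apply Rlt_le, Rinv_0_lt_compat, lt_0_INR. lia.
Qed.

Lemma odd_harmonic_ge (n : nat) : (5 <= n)%nat -> 1.787 <= odd_harmonic n.
Proof.
  intros Hn. apply Rle_trans with (odd_harmonic 5).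
  - unfold odd_harmonic. cbn [sum1]. rewrite !INR_IZR_INZ. simpl Z.of_nat. lra.
  - apply sum1_le_mono; [exact Hn|]. intros k Hk.
    assert (1 <= INR k) by (apply (le_INR 1); lia).
    apply Rlt_le, Rinv_0_lt_compat. lra.
Qed.

Lemma even_sum_gt_large (j : nat) : (18 <= j)%nat -> 2 * INR j < even_sum j.
Proof.
  intros Hj. pose proof PI_bounds as Hpi.
  assert (J : 18 <= INR j) by (apply (le_INR 18) in Hj; simpl in Hj; lra).
  pose proof (psi_sin_sum_ge (j - 1) (fun k => INR k * PI / INR j)) as Sum.
  fold (even_sum j) in Sum.
  rewrite (sum1_ext _ _ (fun k => INR j / PI * / INR k)), sum1_scal in Sum.
  2:{ intros k Hk. assert (0 < INR k) by (apply lt_0_INR; lia). field; lra. }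
  fold (harmonic (j - 1)) in Sum. rewrite minus_INR, INR_1 in Sum by lia.
  assert (Hh : 3.4395 <= harmonic (j - 1)) by (apply harmonic_ge; lia).
  eapply Rlt_le_trans; [|apply Sum].
  - apply Rmult_lt_reg_r with PI; [lra|].
    replace ((4 * (INR j / PI * harmonic (j - 1)) - (INR j - 1) * (4 / PI + 1)) * PI)
      with (4 * INR j * harmonic (j - 1) - (INR j - 1) * (4 + PI)) by (field; lra).
    nra.
  - intros k Hk. split.
    + apply frac_PI_range. split; [apply lt_0_INR|apply lt_INR]; lia.
    + replace (S (j - 1) - k)%nat with (j - k)%nat by lia.
      rewrite minus_INR by lia. field. apply not_0_INR. lia.
Qed.

Lemma odd_sum_gt (j : nat) : (5 <= j)%nat -> 2 * INR j < odd_sum j.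
Proof.
  intros Hj. pose proof PI_bounds as Hpi.
  assert (J : 5 <= INR j) by (apply (le_INR 5) in Hj; simpl in Hj; lra).
  pose proof (psi_sin_sum_ge j (fun k => (2 * INR k - 1) * PI / (2 * INR j))) as Sum.
  fold (odd_sum j) in Sum.
  rewrite (sum1_ext _ _ (fun k => 2 * INR j / PI * / (2 * INR k - 1))), sum1_scal in Sum.
  2:{ intros k Hk. assert (1 <= INR k) by (apply (le_INR 1); lia). field; lra. }
  fold (odd_harmonic j) in Sum.
  assert (Ho : 1.787 <= odd_harmonic j) by (apply odd_harmonic_ge; lia).
  eapply Rlt_le_trans; [|apply Sum].
  - apply Rmult_lt_reg_r with PI; [lra|].
    replace ((4 * (2 * INR j / PI * odd_harmonic j) - INR j * (4 / PI + 1)) * PI)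
      with (8 * INR j * odd_harmonic j - INR j * (4 + PI)) by (field; lra).
    nra.
  - intros k Hk. assert (1 <= INR k <= INR j) by (split; [apply (le_INR 1)|apply le_INR]; lia).
    split.
    + apply frac_PI_range. lra.
    + rewrite minus_INR, S_INR by lia. field. lra.
Qed.

Definition sin_upper (r : R) : R :=
  r * (31416 / 10000) - (r * (314159 / 100000)) ^ 3 / 6 + (r * (31416 / 10000)) ^ 5 / 120.

Lemma sin_le_sin_upper (r : R) : 0 <= r <= 1 -> sin (r * PI) <= sin_upper r.
Proof.
  intros Hr. pose proof PI_bounds as Hpi.
  assert (Hlo : 0 <= r * (314159 / 100000) <= r * PI) by (split; nra).
  assert (Hhi : r * PI <= r * (31416 / 10000)) by nra.
  pose proof (sin_le_taylor5 (r * PI) ltac:(split; nra)).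
  assert ((r * (314159 / 100000)) ^ 3 <= (r * PI) ^ 3) by (apply pow_incr; lra).
  assert ((r * PI) ^ 5 <= (r * (31416 / 10000)) ^ 5) by (apply pow_incr; lra).
  unfold sin_upper. lra.
Qed.

Lemma psi_le_psi_sin (r : R) : 0 < r < 1 -> psi (sin_upper r) <= psi (sin (r * PI)).
Proof.
  intros Hr. pose proof (sin_le_sin_upper r ltac:(lra)).
  assert (0 < sin (r * PI)).
  { apply sin_gt_0; pose proof PI_RGT_0; nra. }
  unfold psi. assert (2 / sin_upper r <= 2 / sin (r * PI)).
  { unfold Rdiv. apply Rmult_le_compat_l; [lra|]. apply Rinv_le_contravar; lra. }
  lra.
Qed.

Fixpoint Qsum1 (n : nat) (F : nat -> Q) : Q :=
  match n with
  | O => 0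
  | S m => Qsum1 m F + F n
  end%Q.

Lemma Q2R_Qsum1 n F : Q2R (Qsum1 n F) = sum1 n (fun k => Q2R (F k)).
Proof.
  induction n as [|n IH]; simpl; [apply RMicromega.Q2R_0|]. rewrite Q2R_plus, IH. reflexivity.
Qed.

Definition sin_upperQ (r : Q) : Q :=
  let a := (r * (314159 # 100000))%Q in
  let b := (r * (31416 # 10000))%Q in
  (b - a * a * a / 6 + b * b * b * b * b / 120)%Q.

Definition psiQ (u : Q) : Q := (2 / u - u)%Q.

Lemma Q2R_sin_upperQ r : Q2R (sin_upperQ r) = sin_upper (Q2R r).
Proof.
  unfold sin_upperQ, sin_upper.
  rewrite Q2R_plus, Q2R_minus, !Q2R_div, !Q2R_mult by (intro E; discriminate E).
  set (x := Q2R r). unfold Q2R. simpl. field.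
Qed.

Lemma Q2R_psiQ u : Q2R u <> 0 -> Q2R (psiQ u) = psi (Q2R u).
Proof.
  intros Hu. assert (Hu' : ~ (u == 0)%Q).
  { intros E. apply Hu. rewrite (Qeq_eqR _ _ E). apply RMicromega.Q2R_0. }
  unfold psiQ, psi. rewrite Q2R_minus, Q2R_div by exact Hu'.
  replace (Q2R 2) with 2 by (unfold Q2R; simpl; lra). reflexivity.
Qed.

Lemma Q2R_of_nat_frac (m j : nat) : (0 < j)%nat ->
  Q2R (Z.of_nat m # Pos.of_nat j) = INR m / INR j.
Proof.
  intros Hj. unfold Q2R. simpl. rewrite !INR_IZR_INZ.
  rewrite <- (Znat.positive_nat_Z (Pos.of_nat j)), Nat2Pos.id by lia. reflexivity.
Qed.

Lemma Q2R_psiQ_sin_upperQ_le (m j : nat) : (0 < m < j)%nat ->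
  Q2R (psiQ (sin_upperQ (Z.of_nat m # Pos.of_nat j))) <= psi (sin (INR m * PI / INR j)).
Proof.
  intros Hmj.
  assert (E : Q2R (sin_upperQ (Z.of_nat m # Pos.of_nat j)) = sin_upper (INR m / INR j))
    by (rewrite Q2R_sin_upperQ, Q2R_of_nat_frac by lia; reflexivity).
  assert (Hr : 0 < INR m / INR j < 1).
  { assert (0 < INR m < INR j) by (split; [apply lt_0_INR|apply lt_INR]; lia).
    split; [apply Rdiv_lt_0_compat; lra|].
    apply Rmult_lt_reg_r with (INR j); [lra|].
    unfold Rdiv. rewrite Rmult_assoc, Rinv_l by lra. lra. }
  replace (INR m * PI / INR j) with (INR m / INR j * PI) by (unfold Rdiv; ring).
  pose proof (sin_le_sin_upper (INR m / INR j) ltac:(lra)).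
  assert (0 < sin (INR m / INR j * PI)) by (apply sin_gt_0; pose proof PI_RGT_0; nra).
  rewrite Q2R_psiQ, E by (rewrite E; apply Rgt_not_eq; lra).
  apply psi_le_psi_sin, Hr.
Qed.

Definition Qround_down (q : Q) : Q := Qfloor (q * 10000) # 10000.

Lemma Qround_down_le (q : Q) : (Qround_down q <= q)%Q.
Proof.
  pose proof (Qfloor_le (q * 10000)) as H. unfold Qround_down.
  unfold Qle in *. simpl in *. lia.
Qed.

(* Near [k = j] the Taylor bound is poor, so the nodes [k PI / j] are reflected into
   [(0, PI / 2]] first; rounding each term keeps the numbers small. *)
Definition even_sum_lowerQ (j : nat) : Q :=
  Qsum1 (j - 1) (fun k =>
    Qround_down (psiQ (sin_upperQ (Z.of_nat (Nat.min k (j - k)) # Pos.of_nat j)))).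

Lemma even_sum_ge_lowerQ (j : nat) : Q2R (even_sum_lowerQ j) <= even_sum j.
Proof.
  unfold even_sum_lowerQ, even_sum. rewrite Q2R_Qsum1. apply sum1_le. intros k Hk.
  eapply Rle_trans; [apply Qle_Rle, Qround_down_le|].
  destruct (Nat.le_ge_cases k (j - k)).
  - rewrite Nat.min_l by lia. apply Q2R_psiQ_sin_upperQ_le. lia.
  - rewrite Nat.min_r by lia.
    replace (INR k * PI / INR j) with (PI - INR (j - k) * PI / INR j).
    + rewrite sin_PI_x. apply Q2R_psiQ_sin_upperQ_le. lia.
    + rewrite minus_INR by lia. field. apply not_0_INR. lia.
Qed.

Lemma even_sum_lowerQ_gt (j : nat) : (7 <= j <= 17)%nat ->
  (inject_Z (2 * Z.of_nat j) < even_sum_lowerQ j)%Q.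
Proof.
  intros Hj. assert (Hin : In j (seq 7 11)) by (apply in_seq; lia).
  clear Hj. revert j Hin. apply Forall_forall.
  repeat (apply Forall_cons; [vm_compute; reflexivity|]). apply Forall_nil.
Qed.

Lemma even_sum_gt_small (j : nat) : (7 <= j <= 17)%nat -> 2 * INR j < even_sum j.
Proof.
  intros Hj. eapply Rlt_le_trans; [|apply even_sum_ge_lowerQ].
  replace (2 * INR j) with (Q2R (inject_Z (2 * Z.of_nat j))).
  - apply Qlt_Rlt, even_sum_lowerQ_gt, Hj.
  - unfold Q2R, inject_Z. cbn [Qnum Qden]. rewrite mult_IZR, INR_IZR_INZ. simpl. field.
Qed.

Lemma even_sum_gt (j : nat) : (7 <= j)%nat -> 2 * INR j < even_sum j.
Proof.
  intros Hj. destruct (Nat.le_gt_cases 18 j).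
  - apply even_sum_gt_large. lia.
  - apply even_sum_gt_small. lia.
Qed.

Lemma g_bounds_2 (j : nat) : (7 <= j)%nat ->
  0 < g1 j 2 /\ Rabs (g3 j 2) < g1 j 2 + g2 j.
Proof.
  intros Hj.
  pose proof (g1_2_eq j ltac:(lia)). pose proof (even_sum_gt j Hj).
  pose proof (g2_sub_g3_2_eq j ltac:(lia)). pose proof (odd_sum_gt j ltac:(lia)).
  pose proof (g2_add_g3_2_pos j ltac:(lia)).
  split; [lra|]. apply Rabs_def1; lra.
Qed.

Lemma g_bounds_ge3 (j l : nat) : (3 <= l < j)%nat ->
  0 < g1 j l /\ Rabs (g3 j l) < g1 j l + g2 j.
Proof.
  intros Hl. pose proof (g1_pos j ltac:(lia) l Hl). pose proof (Rabs_g3_le j ltac:(lia) l Hl).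
  split; lra.
Qed.

Lemma chi_pos (mu1 mu2 : R) (j l : nat) : 0 < mu1 -> 0 < mu2 ->
  0 < g1 j l -> 0 < g2 j -> Rabs (g3 j l) < g1 j l + g2 j -> 0 < chi mu1 mu2 j l.
Proof.
  intros H1 H2 HA HB HC. unfold chi.
  set (A := g1 j l) in *. set (B := g2 j) in *. set (C := g3 j l) in *.
  replace (mu1 * mu2 * (A ^ 2 + B ^ 2 - C ^ 2) + (mu1 ^ 2 + mu2 ^ 2) * A * B)
    with (mu1 * mu2 * ((A + B - C) * (A + B + C)) + (mu1 - mu2) ^ 2 * (A * B)) by ring.
  apply Rabs_def2 in HC.
  assert (0 < mu1 * mu2 * ((A + B - C) * (A + B + C)))
    by (apply Rmult_lt_0_compat; apply Rmult_lt_0_compat; lra).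
  assert (0 <= (mu1 - mu2) ^ 2 * (A * B)) by (apply Rmult_le_pos; [apply pow2_ge_0|nra]).
  lra.
Qed.

Theorem mainTheorem7 (j : nat) (mu1 mu2 : R) :
  (7 <= j)%nat -> 0 < mu1 -> 0 < mu2 ->
  forall l : nat, (2 <= l)%nat -> (l <= (j + 1) / 2)%nat ->
    0 < g1 j l /\ 0 < chi mu1 mu2 j l.
Proof.
  intros Hj Hmu1 Hmu2 l Hl Hlj.
  pose proof (Nat.Div0.mul_div_le (j + 1) 2).
  assert (Hg : 0 < g1 j l /\ Rabs (g3 j l) < g1 j l + g2 j).
  { destruct (Nat.eq_dec l 2) as [->|Hl2].
    - apply g_bounds_2, Hj.
    - apply g_bounds_ge3. lia. }
  destruct Hg as [Hg1 Hg3]. split; [exact Hg1|].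
  apply chi_pos; [exact Hmu1|exact Hmu2|exact Hg1|apply g2_pos; lia|exact Hg3].
Qed.
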